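(* If $\mathfrak{q}$ is a $\mathrm{Lie}$-nilpotent Leibniz algebra, then $\mathfrak{q}$ satisfies the $\mathrm{Lie}$-normalizer condition, i.e. every proper subalgebra $\mathfrak{s}$ of $\mathfrak{q}$ is properly contained in its $\mathrm{Lie}$-normalizer $N^{\mathrm{Lie}}_{\mathfrak{q}}(\mathfrak{s})$.
   Context: Fix a field $\mathbb{K}$ with $\frac12\in\mathbb{K}$. A Leibniz algebra is a $\mathbb{K}$-vector space with a bilinear bracket satisfying $[x,[y,z]]=[[x,y],z]-[[x,z],y]$. For two-sided ideals $\mathfrak{m},\mathfrak{n}$ of $\mathfrak{q}$, $[\mathfrak{m},\mathfrak{n}]_{\mathrm{Lie}}$ is the subspace spanned by all $[m,n]+[n,m]$, $m\in\mathfrak{m}$, $n\in\mathfrak{n}$. The lower $\mathrm{Lie}$-central series is $\mathfrak{q}^{[1]}=\mathfrak{q}$, $\mathfrak{q}^{[i]}=[\mathfrak{q}^{[i-1]},\mathfrak{q}]_{\mathrm{Lie}}$; $\mathfrak{q}$ is $\mathrm{Lie}$-nilpotent if $\mathfrak{q}^{[k]}=0$ for some $k$. For a subset $\mathfrak{m}\subseteq\mathfrak{q}$, the $\mathrm{Lie}$-normalizer is $N^{\mathrm{Lie}}_{\mathfrak{q}}(\mathfrak{m})=\{q\in\mathfrak{q}: [q,m]+[m,q]\in\mathfrak{m}\text{ for all } m\in\mathfrak{m}\}$. *)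

From HB Require Import structures.
From mathcomp Require Import all_boot all_order all_algebra.
Set Implicit Arguments. Unset Strict Implicit. Unset Printing Implicit Defensive.
Import GRing.Theory.
Local Open Scope ring_scope.

Definition bilinear_bracket (K : fieldType) (V : lmodType K) (br : V -> V -> V) : Prop :=
  (forall (a : K) (x y z : V), br (a *: x + y) z = a *: br x z + br y z) /\
  (forall (a : K) (x y z : V), br z (a *: x + y) = a *: br z x + br z y).

Definition leibniz_identity (K : fieldType) (V : lmodType K) (br : V -> V -> V) : Prop :=
  forall x y z : V, br x (br y z) = br (br x y) z - br (br x z) y.

Definition is_leibniz_algebra (K : fieldType) (V : lmodType K) (br : V -> V -> V) : Prop :=
  bilinear_bracket br /\ leibniz_identity br.

Definition is_subspace (K : fieldType) (V : lmodType K) (S : V -> Prop) : Prop :=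
  S 0 /\ (forall (a : K) (x y : V), S x -> S y -> S (a *: x + y)).

Definition is_subalgebra (K : fieldType) (V : lmodType K) (br : V -> V -> V)
  (S : V -> Prop) : Prop :=
  is_subspace S /\ (forall x y, S x -> S y -> S (br x y)).

Definition span (K : fieldType) (V : lmodType K) (A : V -> Prop) : V -> Prop :=
  fun v => forall P : V -> Prop, is_subspace P -> (forall a, A a -> P a) -> P v.

Definition lie_bracket_sets (K : fieldType) (V : lmodType K) (br : V -> V -> V)
  (M N : V -> Prop) : V -> Prop :=
  span (fun v => exists m n, M m /\ N n /\ v = br m n + br n m).

(* Lower Lie-central series: lie_lcs br 0 = q^[1] = q,
   lie_lcs br i.+1 = [lie_lcs br i, q]_Lie, i.e. lie_lcs br (i-1) = q^[i]. *)
Fixpoint lie_lcs (K : fieldType) (V : lmodType K) (br : V -> V -> V) (i : nat)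
  : V -> Prop :=
  match i with
  | 0 => fun _ => True
  | i'.+1 => lie_bracket_sets br (lie_lcs br i') (fun _ => True)
  end.

Definition lie_nilpotent (K : fieldType) (V : lmodType K) (br : V -> V -> V) : Prop :=
  exists k : nat, forall v : V, lie_lcs br k v -> v = 0.

Definition lie_normalizer (K : fieldType) (V : lmodType K) (br : V -> V -> V)
  (M : V -> Prop) : V -> Prop :=
  fun q => forall m, M m -> M (br q m + br m q).

From mathcomp Require Import all_boot all_order all_algebra.
From Stdlib Require Import Classical.
Import GRing.Theory.
Set Implicit Arguments. Unset Strict Implicit.
Local Open Scope ring_scope.

(* Since q^[1] = q is not contained in the proper subalgebra s while
   q^[k] = 0 is, there is a last term q^[i] of the lower Lie-central series
   not contained in s.  Any x in q^[i] \ s then Lie-normalizes s, because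
   [x, m] + [m, x] lies in q^[i+1], which is contained in s. *)

Lemma ex_true_then_false (P : nat -> Prop) (n : nat) :
  P 0%N -> ~ P n -> exists i, P i /\ ~ P i.+1.
Proof.
elim: n => [|n IHn] P0 Pn; first by [].
by case: (classic (P n)) => [Pn' | nPn]; [exists n | exact: IHn].
Qed.

Section LieNormalizer.

Variables (K : fieldType) (V : lmodType K) (br : V -> V -> V).

Lemma subalgebraD (s : V -> Prop) x y :
  is_subalgebra br s -> s x -> s y -> s (x + y).
Proof. by move=> [[_ sZD] _] sx sy; rewrite -[x]scale1r; exact: sZD. Qed.

Lemma subalgebra_sub_lie_normalizer (s : V -> Prop) x :
  is_subalgebra br s -> s x -> lie_normalizer br s x.
Proof.
by move=> sS sx m sm; case: (sS) => _ sbr; apply: subalgebraD => //; exact: sbr.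
Qed.

Lemma lie_bracket_sets_mem (M N : V -> Prop) m n :
  M m -> N n -> lie_bracket_sets br M N (br m n + br n m).
Proof. by move=> Mm Nn P _ genP; apply: genP; exists m, n. Qed.

Lemma lie_lcsS_mem i x y :
  lie_lcs br i x -> lie_lcs br i.+1 (br x y + br y x).
Proof. by move=> lx; exact: lie_bracket_sets_mem. Qed.

Lemma lie_lcs_last_not_sub (s : V -> Prop) :
  lie_nilpotent br -> (exists x, ~ s x) -> s 0 ->
  exists i, (exists x, lie_lcs br i x /\ ~ s x) /\
            (forall y, lie_lcs br i.+1 y -> s y).
Proof.
move=> [k lcs_k0] [x0 nsx0] s0.
pose not_sub i := exists x, lie_lcs br i x /\ ~ s x.
have not_sub0 : not_sub 0%N by exists x0.
have not_subk : ~ not_sub k by move=> [x [lx []]]; rewrite (lcs_k0 x lx).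
have [i [not_sub_i sub_iS]] := ex_true_then_false not_sub0 not_subk.
exists i; split=> // y ly; apply: NNPP => nsy; apply: sub_iS.
by exists y.
Qed.

Lemma lie_lcs_sub_lie_normalizer (s : V -> Prop) i x :
  (forall y, lie_lcs br i.+1 y -> s y) -> lie_lcs br i x ->
  lie_normalizer br s x.
Proof. by move=> sub_iS lx m _; apply: sub_iS; exact: lie_lcsS_mem. Qed.

End LieNormalizer.

Theorem mainTheorem2 (K : fieldType) (V : lmodType K) (br : V -> V -> V) :
  (2%:R : K) != 0 ->
  is_leibniz_algebra br ->
  lie_nilpotent br ->
  forall s : V -> Prop,
    is_subalgebra br s ->
    (exists x : V, ~ s x) ->
    (forall x, s x -> lie_normalizer br s x) /\
    (exists x : V, lie_normalizer br s x /\ ~ s x).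
Proof.
move=> _ _ nil_br s sS proper_s.
split=> [x sx|]; first exact: subalgebra_sub_lie_normalizer.
have [i [[x [lx nsx]] sub_iS]] := lie_lcs_last_not_sub nil_br proper_s sS.1.1.
by exists x; split=> //; exact: lie_lcs_sub_lie_normalizer lx.
Qed.
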